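(* Let $K>0$, $D>0$, $\sigma>0$, $r\in\mathbf{R}$ and $0<\tau<T$. For $S_->0$ define \[ V(S_-,\tau)=\begin{cases}(S_--D)\,N\!\left(\bar d+\sigma\sqrt{T-\tau}\right)-Ke^{-r(T-\tau)}N(\bar d), & S_->D,\\ 0, & S_-\le D,\end{cases} \qquad \bar d=\frac{\ln(S_--D)-\ln K+\left(r-\frac12\sigma^2\right)(T-\tau)}{\sigma\sqrt{T-\tau}}, \] where $N$ is the standard normal cumulative distribution function. Fix $S^*>D$ and an integer $M\ge1$; set $S_i=D+i\,\frac{S^*-D}{M}$ for $i=0,\dots,M$ and \[ \alpha_i=\frac{M}{S^*-D}\left[V(S_i,\tau)-V(S_{i-1},\tau)\right],\quad i=1,\dots,M . \] Define \[ V_1^+(S_-,\tau)=\sum_{i=1}^M\left[\alpha_i(S_--S_{i-1})+V(S_{i-1},\tau)\right]\chi_{[S_{i-1},S_i]}(S_-),\qquad V_2^+(S_-,\tau)=\left[(S_--S^* )+V(S^*,\tau)\right]\chi_{[S^*,\infty)}(S_-), \] where $\chi_I$ is the characteristic function of the set $I$. Then $V(S_-,\tau)\le V_1^+(S_-,\tau)+V_2^+(S_-,\tau)$ for all $S_->D$, and the function $V_1^++V_2^+$ is piecewise linear and non-negative. If $S_-\le D$, then $V(S_-,\tau)=0$.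
   Context: $V(S_-,\tau)$ is the value, just before a dividend $D$ is paid at time $\tau$, of a European call option with strike $K$ and maturity $T$ in a Black-Scholes economy (risk-free rate $r$, volatility $\sigma$), as a function of the stock price $S_-$ just before the dividend payment. Note $V(S_0,\tau)=V(D,\tau)=0$. *)

From Stdlib Require Import Reals Lra List.
From Coquelicot Require Import Coquelicot.
Open Scope R_scope.

Definition normal_pdf (t : R) : R := exp (- (t ^ 2) / 2) / sqrt (2 * PI).
Definition Ncdf (x : R) : R := RInt_gen normal_pdf (Rbar_locally m_infty) (at_point x).

Definition dbar (K D sigma r T tau S : R) : R :=
  (ln (S - D) - ln K + (r - sigma ^ 2 / 2) * (T - tau)) / (sigma * sqrt (T - tau)).

Definition Vcall (K D sigma r T tau S : R) : R :=
  if Rle_dec S D then 0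
  else (S - D) * Ncdf (dbar K D sigma r T tau S + sigma * sqrt (T - tau))
       - K * exp (- r * (T - tau)) * Ncdf (dbar K D sigma r T tau S).

Definition chi_cc (a b x : R) : R :=
  if Rle_dec a x then (if Rle_dec x b then 1 else 0) else 0.
Definition chi_ge (a x : R) : R := if Rle_dec a x then 1 else 0.

Definition node (D Sstar : R) (M i : nat) : R := D + INR i * ((Sstar - D) / INR M).

Definition alpha (K D sigma r T tau Sstar : R) (M i : nat) : R :=
  INR M / (Sstar - D) *
  (Vcall K D sigma r T tau (node D Sstar M i) - Vcall K D sigma r T tau (node D Sstar M (i - 1))).

Definition V1plus (K D sigma r T tau Sstar : R) (M : nat) (S : R) : R :=
  sum_n_m (fun i =>
    (alpha K D sigma r T tau Sstar M i * (S - node D Sstar M (i - 1))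
     + Vcall K D sigma r T tau (node D Sstar M (i - 1)))
    * chi_cc (node D Sstar M (i - 1)) (node D Sstar M i) S) 1 M.

Definition V2plus (K D sigma r T tau Sstar : R) (S : R) : R :=
  ((S - Sstar) + Vcall K D sigma r T tau Sstar) * chi_ge Sstar S.

Definition piecewise_linear (f : R -> R) : Prop :=
  exists pts : list R,
    forall a b : R, a < b -> (forall p, In p pts -> ~ (a < p < b)) ->
      exists c d : R, forall x, a < x < b -> f x = c * x + d.

From Stdlib Require Import Reals List Lra Lia Classical_Prop.
From Coquelicot Require Import Coquelicot.
Open Scope R_scope.

(* For S > D the value V is a Black-Scholes call on S - D. Its delta is
   N(dbar + sigma sqrt(T - tau)), the two density terms cancelling; it lies in [0, 1]
   and increases with S, so V is convex with slope at most 1. Moreover V(S)/(S - D) is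
   nondecreasing, which extends the chord bound to the first cell [D, S_1], where V is
   not differentiable. Hence on each cell V lies below its chord, the active term of
   V_1^+ (all other terms are nonnegative), and beyond Sstar the slope bound gives
   V(S) <= (S - Sstar) + V(Sstar). Finally V >= 0 because
   V(S) = int_{-oo}^{dbar} [(S - D) phi(t + sigma sqrt(T - tau)) - K e^{-r(T - tau)} phi(t)] dt
   has a nonnegative integrand. That N is a distribution function with values in [0, 1]
   rests on the bound (int_0^x e^{-t^2} dt)^2 <= pi/4. *)

Lemma continuous_of_ex_derive (f : R -> R) (x : R) : ex_derive f x -> continuous f x.
Proof. exact (@ex_derive_continuous R_AbsRing R_NormedModule f x). Qed.

Lemma continuity_pt_of_is_derive (f : R -> R) (x l : R) : is_derive f x l -> continuity_pt f x.
Proof. intros H. apply continuity_pt_filterlim, continuous_of_ex_derive. exists l. exact H. Qed.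

Section MeanValue.
Variables (f df : R -> R) (x y : R).
Hypothesis Hxy : x <= y.
Hypothesis Hderive : forall z, x <= z <= y -> is_derive f z (df z).

Lemma mean_value_closed : exists c, x <= c <= y /\ f y - f x = df c * (y - x).
Proof.
  destruct (MVT_gen f x y df) as [c [Hc E]].
  - intros z Hz. rewrite Rmin_left, Rmax_right in Hz by lra. apply Hderive. lra.
  - intros z Hz. rewrite Rmin_left, Rmax_right in Hz by lra.
    apply (continuity_pt_of_is_derive f z (df z)), Hderive, Hz.
  - rewrite Rmin_left, Rmax_right in Hc by lra. exists c. split; assumption.
Qed.

Lemma le_of_derive_nonneg : (forall z, x <= z <= y -> 0 <= df z) -> f x <= f y.
Proof.
  intros Hpos. destruct mean_value_closed as [c [Hc E]].
  assert (0 <= df c * (y - x)) by (apply Rmult_le_pos; [apply Hpos, Hc | lra]).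
  lra.
Qed.

Lemma sub_le_of_derive_le (k : R) : (forall z, x <= z <= y -> df z <= k) -> f y - f x <= k * (y - x).
Proof.
  intros Hk. destruct mean_value_closed as [c [Hc E]]. rewrite E.
  apply Rmult_le_compat_r; [lra | apply Hk, Hc].
Qed.

End MeanValue.

Lemma chord_of_derive_nondecreasing (f df : R -> R) (u w X : R) :
  u <= X <= w -> u < w ->
  (forall z, u <= z <= w -> is_derive f z (df z)) ->
  (forall z1 z2, u <= z1 -> z1 <= z2 -> z2 <= w -> df z1 <= df z2) ->
  f X <= f u + (f w - f u) / (w - u) * (X - u).
Proof.
  intros HX Huw Hderive Hmono.
  destruct (mean_value_closed f df u X) as [c1 [Hc1 E1]]; [lra | intros; apply Hderive; lra |].
  destruct (mean_value_closed f df X w) as [c2 [Hc2 E2]]; [lra | intros; apply Hderive; lra |].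
  assert (Hm : df c1 <= df c2) by (apply Hmono; lra).
  assert (Hslope : df c1 <= (f w - f u) / (w - u)).
  { apply Rmult_le_reg_r with (w - u); [lra |].
    unfold Rdiv. rewrite Rmult_assoc, Rinv_l by lra.
    assert (df c1 * (w - X) <= df c2 * (w - X)) by (apply Rmult_le_compat_r; lra).
    lra. }
  assert (df c1 * (X - u) <= (f w - f u) / (w - u) * (X - u)) by (apply Rmult_le_compat_r; lra).
  lra.
Qed.

(** * A bound on the Gaussian integral *)

Definition gauss (t : R) : R := exp (- t ^ 2).

Lemma gauss_continuous (t : R) : continuous gauss t.
Proof. apply continuous_of_ex_derive. unfold gauss. auto_derive. auto. Qed.

Lemma ex_RInt_gauss (a b : R) : ex_RInt gauss a b.
Proof. apply (@ex_RInt_continuous R_CompleteNormedModule). intros; apply gauss_continuous. Qed.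

Definition gauss_int (x : R) : R := RInt gauss 0 x.

Lemma is_derive_gauss_int (x : R) : is_derive gauss_int x (gauss x).
Proof.
  apply (is_derive_RInt gauss gauss_int 0 x).
  - apply filter_forall. intros b. apply (@RInt_correct R_CompleteNormedModule), ex_RInt_gauss.
  - apply gauss_continuous.
Qed.

(* The classical evaluation of the Gaussian integral: [atan_kernel_int x + gauss_int x ^ 2]
   has zero derivative and equals [atan 1] at [0]. *)
Definition atan_kernel (x t : R) : R := exp (- x ^ 2 * (1 + t ^ 2)) / (1 + t ^ 2).

Definition atan_kernel_int (x : R) : R := RInt (atan_kernel x) 0 1.

Lemma atan_kernel_continuous (x t : R) : continuous (atan_kernel x) t.
Proof. apply continuous_of_ex_derive. unfold atan_kernel. auto_derive. nra. Qed.

Lemma ex_RInt_atan_kernel (x : R) : ex_RInt (atan_kernel x) 0 1.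
Proof. apply (@ex_RInt_continuous R_CompleteNormedModule). intros; apply atan_kernel_continuous. Qed.

Lemma is_derive_atan_kernel (x t : R) :
  is_derive (fun z => atan_kernel z t) x (-2 * x * exp (- x ^ 2 * (1 + t ^ 2))).
Proof. unfold atan_kernel. auto_derive; [auto | simpl; field; nra]. Qed.

Lemma atan_kernel_derive_continuous (x t : R) :
  continuity_2d_pt (fun u v => Derive (fun z => atan_kernel z v) u) x t.
Proof.
  apply continuity_2d_pt_ext with (f := fun u v => -2 * u * exp (- u ^ 2 * (1 + v ^ 2))).
  { intros u v. symmetry. apply is_derive_unique, is_derive_atan_kernel. }
  apply continuity_2d_pt_mult.
  - apply continuity_2d_pt_mult; [apply continuity_2d_pt_const | apply continuity_2d_pt_id1].
  - apply continuity_1d_2d_pt_comp with (f := exp).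
    + apply derivable_continuous_pt, derivable_pt_exp.
    + apply continuity_2d_pt_mult.
      * apply continuity_2d_pt_opp, continuity_2d_pt_mult; [apply continuity_2d_pt_id1 |].
        apply continuity_2d_pt_mult; [apply continuity_2d_pt_id1 | apply continuity_2d_pt_const].
      * apply continuity_2d_pt_plus; [apply continuity_2d_pt_const |].
        apply continuity_2d_pt_mult; [apply continuity_2d_pt_id2 |].
        apply continuity_2d_pt_mult; [apply continuity_2d_pt_id2 | apply continuity_2d_pt_const].
Qed.

(* Substitute [t := x t] and split [exp (- x^2 (1 + t^2)) = exp (- x^2) exp (- (x t)^2)]. *)
Lemma RInt_atan_kernel_derive (x : R) :
  RInt (fun t => -2 * x * exp (- x ^ 2 * (1 + t ^ 2))) 0 1 = -2 * exp (- x ^ 2) * gauss_int x.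
Proof.
  rewrite (@RInt_ext R_CompleteNormedModule _
             (fun t => scal (-2 * exp (- x ^ 2)) (scal x (gauss (x * t + 0))))).
  - rewrite (@RInt_scal R_CompleteNormedModule).
    + rewrite (@RInt_comp_lin R_CompleteNormedModule) by apply ex_RInt_gauss.
      unfold gauss_int, scal; simpl; unfold mult; simpl. f_equal; f_equal; ring.
    + apply (@ex_RInt_continuous R_CompleteNormedModule). intros.
      apply continuous_of_ex_derive. unfold gauss, scal; simpl; unfold mult; simpl.
      auto_derive. auto.
  - intros t _. unfold gauss, scal; simpl; unfold mult; simpl.
    replace (- (x * (x * 1)) * (1 + t * (t * 1)))
      with (- (x * (x * 1)) + - ((x * t + 0) * ((x * t + 0) * 1))) by ring.
    rewrite exp_plus. ring.
Qed.

Lemma is_derive_atan_kernel_int (x : R) :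
  is_derive atan_kernel_int x (-2 * exp (- x ^ 2) * gauss_int x).
Proof.
  rewrite <- RInt_atan_kernel_derive.
  rewrite (@RInt_ext R_CompleteNormedModule _ (fun t => Derive (fun z => atan_kernel z t) x)).
  - apply (is_derive_RInt_param atan_kernel 0 1 x).
    + apply filter_forall. intros y t _. eexists. apply is_derive_atan_kernel.
    + intros t _. apply atan_kernel_derive_continuous.
    + apply filter_forall. intros y. apply ex_RInt_atan_kernel.
  - intros t _. symmetry. apply is_derive_unique, is_derive_atan_kernel.
Qed.

Lemma atan_kernel_int_0 : atan_kernel_int 0 = PI / 4.
Proof.
  unfold atan_kernel_int. rewrite <- atan_1.
  rewrite (@RInt_ext R_CompleteNormedModule _ (fun t => / (1 + t ^ 2))).
  - assert (HI : is_RInt (fun t => / (1 + t ^ 2)) 0 1 (minus (atan 1) (atan 0))).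
    { apply (@is_RInt_derive R_CompleteNormedModule atan).
      + intros x _. apply is_derive_Reals, derivable_pt_lim_atan.
      + intros x _. apply continuous_of_ex_derive. auto_derive. nra. }
    rewrite (is_RInt_unique _ _ _ _ HI), atan_0. unfold minus, plus, opp. simpl. ring.
  - intros x _. unfold atan_kernel. simpl.
    rewrite Rmult_0_l, Ropp_0, Rmult_0_l, exp_0. field. nra.
Qed.

Lemma atan_kernel_int_nonneg (x : R) : 0 <= atan_kernel_int x.
Proof.
  apply RInt_ge_0; [lra | apply ex_RInt_atan_kernel |].
  intros t _. unfold atan_kernel. apply Rlt_le, Rdiv_lt_0_compat; [apply exp_pos | nra].
Qed.

Lemma atan_kernel_int_plus_gauss_int_sqr (x : R) : atan_kernel_int x + gauss_int x ^ 2 = PI / 4.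
Proof.
  set (g y := atan_kernel_int y + gauss_int y ^ 2).
  assert (Hg : forall y, is_derive g y 0).
  { intros y. unfold g.
    replace 0 with (-2 * exp (- y ^ 2) * gauss_int y + INR 2 * gauss y * gauss_int y ^ Nat.pred 2)
      by (unfold gauss; simpl; ring).
    apply (is_derive_plus atan_kernel_int (fun z => gauss_int z ^ 2)).
    - apply is_derive_atan_kernel_int.
    - apply (is_derive_pow gauss_int 2 y (gauss y)), is_derive_gauss_int. }
  destruct (MVT_gen g 0 x (fun _ => 0)) as [c [_ Hc]].
  - intros y _. apply Hg.
  - intros y _. apply (continuity_pt_of_is_derive g y 0), Hg.
  - unfold g in Hc. rewrite atan_kernel_int_0 in Hc.
    unfold gauss_int at 2 in Hc. rewrite RInt_point in Hc. unfold zero in Hc; simpl in Hc.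
    unfold g. lra.
Qed.

Lemma Rabs_gauss_int_le (x : R) : Rabs (gauss_int x) <= sqrt PI / 2.
Proof.
  pose proof (atan_kernel_int_plus_gauss_int_sqr x). pose proof (atan_kernel_int_nonneg x).
  pose proof PI_RGT_0.
  rewrite <- (sqrt_Rsqr (Rabs (gauss_int x))) by apply Rabs_pos.
  replace (sqrt PI / 2) with (sqrt (PI / 4)).
  - apply sqrt_le_1_alt. rewrite <- Rsqr_abs. unfold Rsqr. simpl in H. lra.
  - rewrite sqrt_div_alt by lra. replace 4 with (2 * 2) by ring. rewrite sqrt_square by lra. reflexivity.
Qed.

(** * The standard normal distribution function *)

Lemma normal_pdf_pos (t : R) : 0 < normal_pdf t.
Proof.
  unfold normal_pdf. apply Rdiv_lt_0_compat; [apply exp_pos |].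
  apply sqrt_lt_R0. pose proof PI_RGT_0. lra.
Qed.

Lemma normal_pdf_continuous (t : R) : continuous normal_pdf t.
Proof. apply continuous_of_ex_derive. unfold normal_pdf. auto_derive. auto. Qed.

Lemma ex_RInt_normal_pdf (a b : R) : ex_RInt normal_pdf a b.
Proof. apply (@ex_RInt_continuous R_CompleteNormedModule). intros; apply normal_pdf_continuous. Qed.

Lemma normal_pdf_shift (t u : R) : normal_pdf (t + u) = normal_pdf t * exp (- (t * u) - u ^ 2 / 2).
Proof.
  unfold normal_pdf.
  replace (- (t + u) ^ 2 / 2) with (- t ^ 2 / 2 + (- (t * u) - u ^ 2 / 2)) by field.
  rewrite exp_plus. field. apply Rgt_not_eq, sqrt_lt_R0. pose proof PI_RGT_0. lra.
Qed.

Definition normal_int (y : R) : R := RInt normal_pdf 0 y.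

Lemma is_derive_normal_int (y : R) : is_derive normal_int y (normal_pdf y).
Proof.
  apply (is_derive_RInt normal_pdf normal_int 0 y).
  - apply filter_forall. intros b. apply (@RInt_correct R_CompleteNormedModule), ex_RInt_normal_pdf.
  - apply normal_pdf_continuous.
Qed.

Lemma normal_int_le (a b : R) : a <= b -> normal_int a <= normal_int b.
Proof.
  intros Hab. apply (le_of_derive_nonneg normal_int normal_pdf a b Hab).
  - intros; apply is_derive_normal_int.
  - intros; apply Rlt_le, normal_pdf_pos.
Qed.

Lemma normal_int_gauss_int (y : R) : normal_int y = / sqrt PI * gauss_int (/ sqrt 2 * y).
Proof.
  pose proof PI_RGT_0.
  assert (H2 : 0 < sqrt 2) by (apply sqrt_lt_R0; lra).
  assert (HPI : 0 < sqrt PI) by (apply sqrt_lt_R0; lra).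
  unfold normal_int.
  rewrite (@RInt_ext R_CompleteNormedModule _
             (fun t => scal (/ sqrt PI) (scal (/ sqrt 2) (gauss (/ sqrt 2 * t + 0))))).
  - rewrite (@RInt_scal R_CompleteNormedModule).
    + rewrite (@RInt_comp_lin R_CompleteNormedModule) by apply ex_RInt_gauss.
      unfold gauss_int, scal; simpl; unfold mult; simpl. f_equal. f_equal; ring.
    + apply (@ex_RInt_continuous R_CompleteNormedModule). intros.
      apply continuous_of_ex_derive. unfold gauss, scal; simpl; unfold mult; simpl.
      auto_derive. auto.
  - intros t _. unfold gauss, normal_pdf, scal; simpl; unfold mult; simpl.
    rewrite sqrt_mult by lra.
    replace (- ((/ sqrt 2 * t + 0) * ((/ sqrt 2 * t + 0) * 1))) with (- (t * (t * 1)) / 2).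
    + field. lra.
    + replace ((/ sqrt 2 * t + 0) * ((/ sqrt 2 * t + 0) * 1)) with (t * t / (sqrt 2 * sqrt 2))
        by (field; lra).
      rewrite sqrt_sqrt by lra. field.
Qed.

Lemma Rabs_normal_int_le (y : R) : Rabs (normal_int y) <= / 2.
Proof.
  pose proof PI_RGT_0.
  assert (HPI : 0 < sqrt PI) by (apply sqrt_lt_R0; lra).
  rewrite normal_int_gauss_int, Rabs_mult, Rabs_right
    by (apply Rle_ge, Rlt_le, Rinv_0_lt_compat; exact HPI).
  pose proof (Rabs_gauss_int_le (/ sqrt 2 * y)).
  apply Rmult_le_reg_l with (sqrt PI); [exact HPI |].
  rewrite <- Rmult_assoc, Rinv_r by lra. lra.
Qed.

Lemma Ncdf_normal_int :
  exists L, - / 2 <= L /\ (forall a, L <= normal_int a)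
    /\ (forall eps, 0 < eps -> exists a, normal_int a < L + eps)
    /\ (forall y, Ncdf y = normal_int y - L).
Proof.
  set (E z := exists a, z = - normal_int a).
  assert (HE : bound E).
  { exists (/ 2). intros z [a ->]. pose proof (Rabs_normal_int_le a) as H.
    apply Rabs_le_between in H. lra. }
  destruct (completeness E HE (ex_intro _ _ (ex_intro _ 0 eq_refl))) as [U [HU1 HU2]].
  assert (Hlow : forall a, - U <= normal_int a).
  { intros a. assert (E (- normal_int a)) as Ha by (exists a; reflexivity).
    apply HU1 in Ha. lra. }
  assert (Happrox : forall eps, 0 < eps -> exists a, normal_int a < - U + eps).
  { intros eps Heps. apply NNPP. intros Hn.
    assert (U <= U - eps); [| lra].
    apply HU2. intros z [a ->].
    assert (~ normal_int a < - U + eps) by (intros Ha; apply Hn; exists a; exact Ha).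
    lra. }
  exists (- U). split; [| split; [exact Hlow | split; [exact Happrox |]]].
  { assert (U <= / 2); [| lra].
    apply HU2. intros z [a ->]. pose proof (Rabs_normal_int_le a) as H.
    apply Rabs_le_between in H. lra. }
  intros y. unfold Ncdf. apply is_RInt_gen_unique.
  intros P [eps Heps].
  destruct (Happrox eps (cond_pos eps)) as [a0 Ha0].
  apply Filter_prod with (Q := fun a => a < a0) (R := fun b => b = y).
  - exists a0. auto.
  - reflexivity.
  - intros a b Ha ->. exists (RInt normal_pdf a y). split.
    + apply (@RInt_correct R_CompleteNormedModule), ex_RInt_normal_pdf.
    + apply Heps.
      assert (Hsplit : RInt normal_pdf a y = normal_int y - normal_int a).
      { unfold normal_int.
        rewrite <- (@RInt_Chasles R_CompleteNormedModule normal_pdf 0 a y) by apply ex_RInt_normal_pdf.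
        unfold plus; simpl. lra. }
      pose proof (Hlow a). pose proof (normal_int_le a a0 (Rlt_le _ _ Ha)).
      unfold ball; simpl; unfold AbsRing_ball, abs, minus, plus, opp; simpl.
      rewrite Hsplit, Rabs_left1; lra.
Qed.

Lemma is_derive_Ncdf (y : R) : is_derive Ncdf y (normal_pdf y).
Proof.
  destruct Ncdf_normal_int as [L [_ [_ [_ HN]]]].
  apply (is_derive_ext (fun x => normal_int x - L)); [intros; rewrite HN; reflexivity |].
  rewrite <- (Rminus_0_r (normal_pdf y)).
  apply (is_derive_minus normal_int (fun _ => L)).
  - apply is_derive_normal_int.
  - apply (@is_derive_const R_AbsRing R_NormedModule).
Qed.

Lemma Ncdf_nonneg (y : R) : 0 <= Ncdf y.
Proof. destruct Ncdf_normal_int as [L [_ [Hlow [_ HN]]]]. rewrite HN. specialize (Hlow y). lra. Qed.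

Lemma Ncdf_le_1 (y : R) : Ncdf y <= 1.
Proof.
  destruct Ncdf_normal_int as [L [HL [_ [_ HN]]]]. rewrite HN.
  pose proof (Rabs_normal_int_le y) as H. apply Rabs_le_between in H. lra.
Qed.

Lemma Ncdf_le (a b : R) : a <= b -> Ncdf a <= Ncdf b.
Proof.
  intros Hab. apply (le_of_derive_nonneg Ncdf normal_pdf a b Hab).
  - intros; apply is_derive_Ncdf.
  - intros; apply Rlt_le, normal_pdf_pos.
Qed.

Lemma Ncdf_small (eps : R) : 0 < eps -> exists a, Ncdf a < eps.
Proof.
  intros Heps. destruct Ncdf_normal_int as [L [_ [_ [Happrox HN]]]].
  destruct (Happrox eps Heps) as [a Ha]. exists a. rewrite HN. lra.
Qed.

(** * The call value before the dividend *)

Section BlackScholes.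
Variables K D sigma r T tau : R.
Hypotheses (HK : 0 < K) (Hsigma : 0 < sigma) (Htau : tau < T).

Let sd := sigma * sqrt (T - tau).
Let Kdisc := K * exp (- r * (T - tau)).
Let d := dbar K D sigma r T tau.

Lemma sd_pos : 0 < sd.
Proof. apply Rmult_lt_0_compat; [exact Hsigma |]. apply sqrt_lt_R0. lra. Qed.

Lemma Kdisc_pos : 0 < Kdisc.
Proof. apply Rmult_lt_0_compat; [exact HK | apply exp_pos]. Qed.

Definition bs_call (X : R) : R := (X - D) * Ncdf (d X + sd) - Kdisc * Ncdf (d X).

Lemma is_derive_dbar (X : R) : D < X -> is_derive d X (/ ((X - D) * sd)).
Proof.
  intros HX. pose proof sd_pos. unfold d, dbar. auto_derive; [lra |].
  fold sd. field. split; lra.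
Qed.

Lemma dbar_le (a b : R) : D < a -> a <= b -> d a <= d b.
Proof.
  intros Ha Hab. pose proof sd_pos.
  apply (le_of_derive_nonneg d (fun X => / ((X - D) * sd)) a b Hab).
  - intros X HX. apply is_derive_dbar. lra.
  - intros X HX. apply Rlt_le, Rinv_0_lt_compat, Rmult_lt_0_compat; lra.
Qed.

Lemma dbar_spec (X : R) : D < X -> (X - D) * exp (- (d X * sd) - sd ^ 2 / 2) = Kdisc.
Proof.
  intros HX. pose proof sd_pos.
  assert (Hsd2 : sd ^ 2 = sigma ^ 2 * (T - tau)).
  { unfold sd. rewrite Rpow_mult_distr, pow2_sqrt; lra. }
  replace (- (d X * sd) - sd ^ 2 / 2) with (- ln (X - D) + (ln K + - r * (T - tau))).
  - rewrite !exp_plus, exp_Ropp, !exp_ln by lra. unfold Kdisc. field. lra.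
  - rewrite Hsd2. unfold d, dbar. fold sd. field. lra.
Qed.

Lemma normal_pdf_le_shift (X t : R) : D < X -> t <= d X ->
  Kdisc * normal_pdf t <= (X - D) * normal_pdf (t + sd).
Proof.
  intros HX Ht. pose proof sd_pos. pose proof (normal_pdf_pos t).
  rewrite normal_pdf_shift, <- (dbar_spec X HX).
  assert (exp (- (d X * sd) - sd ^ 2 / 2) <= exp (- (t * sd) - sd ^ 2 / 2)).
  { destruct (Req_dec t (d X)) as [-> | Hne]; [lra |].
    apply Rlt_le, exp_increasing. assert (t * sd < d X * sd) by (apply Rmult_lt_compat_r; lra). lra. }
  assert (normal_pdf t * exp (- (d X * sd) - sd ^ 2 / 2)
          <= normal_pdf t * exp (- (t * sd) - sd ^ 2 / 2)) by (apply Rmult_le_compat_l; lra).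
  assert (0 < X - D) by lra.
  nra.
Qed.

(* The two density terms cancel by [dbar_spec]. *)
Lemma is_derive_bs_call (X : R) : D < X -> is_derive bs_call X (Ncdf (d X + sd)).
Proof.
  intros HX. pose proof sd_pos.
  set (dd := / ((X - D) * sd)).
  assert (H1 : is_derive (fun Y => Ncdf (d Y + sd)) X (dd * normal_pdf (d X + sd))).
  { apply (is_derive_comp Ncdf (fun Y => d Y + sd)); [apply is_derive_Ncdf |].
    rewrite <- (Rplus_0_r dd).
    apply (is_derive_plus d (fun _ => sd)); [apply is_derive_dbar, HX |].
    apply (@is_derive_const R_AbsRing R_NormedModule). }
  assert (H2 : is_derive (fun Y => Ncdf (d Y)) X (dd * normal_pdf (d X))).
  { apply (is_derive_comp Ncdf d); [apply is_derive_Ncdf | apply is_derive_dbar, HX]. }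
  assert (H3 : is_derive (fun Y => Y - D) X 1) by (auto_derive; [auto | ring]).
  assert (Hcancel : (X - D) * normal_pdf (d X + sd) = Kdisc * normal_pdf (d X)).
  { rewrite normal_pdf_shift, <- (dbar_spec X HX). ring. }
  replace (Ncdf (d X + sd)) with
    (1 * Ncdf (d X + sd) + (X - D) * (dd * normal_pdf (d X + sd)) - Kdisc * (dd * normal_pdf (d X))).
  - apply (is_derive_minus (fun Y => (Y - D) * Ncdf (d Y + sd)) (fun Y => Kdisc * Ncdf (d Y))).
    + apply (is_derive_mult (fun Y => Y - D) (fun Y => Ncdf (d Y + sd)));
        [exact H3 | exact H1 | intros; apply Rmult_comm].
    + apply (is_derive_scal (fun Y => Ncdf (d Y))), H2.
  - transitivity (Ncdf (d X + sd) + dd * ((X - D) * normal_pdf (d X + sd) - Kdisc * normal_pdf (d X)));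
      [ring |].
    rewrite Hcancel. ring.
Qed.

Lemma is_derive_bs_call_ratio (X : R) : D < X ->
  is_derive (fun Y => bs_call Y / (Y - D)) X (Kdisc * Ncdf (d X) / (X - D) ^ 2).
Proof.
  intros HX.
  assert (H1 : is_derive (fun Y => Y - D) X 1) by (auto_derive; [auto | ring]).
  replace (Kdisc * Ncdf (d X) / (X - D) ^ 2)
    with ((Ncdf (d X + sd) * (X - D) - bs_call X * 1) / (X - D) ^ 2)
    by (unfold bs_call; field; lra).
  apply (is_derive_div bs_call (fun Y => Y - D)); [apply is_derive_bs_call, HX | exact H1 | lra].
Qed.

Lemma bs_call_ratio_le (X w : R) : D < X -> X <= w -> bs_call X <= (X - D) / (w - D) * bs_call w.
Proof.
  intros HX Hw. pose proof Kdisc_pos.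
  assert (Hratio : bs_call X / (X - D) <= bs_call w / (w - D)).
  { apply (le_of_derive_nonneg (fun Y => bs_call Y / (Y - D))
             (fun Y => Kdisc * Ncdf (d Y) / (Y - D) ^ 2) X w Hw).
    - intros Y HY. apply is_derive_bs_call_ratio. lra.
    - intros Y HY. apply Rmult_le_pos.
      + apply Rmult_le_pos; [lra | apply Ncdf_nonneg].
      + apply Rlt_le, Rinv_0_lt_compat, pow_lt. lra. }
  replace (bs_call X) with ((X - D) * (bs_call X / (X - D))) by (field; lra).
  replace ((X - D) / (w - D) * bs_call w) with ((X - D) * (bs_call w / (w - D))) by (field; lra).
  apply Rmult_le_compat_l; lra.
Qed.

Lemma bs_call_chord (u w X : R) : D < u -> u < w -> u <= X <= w ->
  bs_call X <= bs_call u + (bs_call w - bs_call u) / (w - u) * (X - u).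
Proof.
  intros Hu Huw HX.
  apply (chord_of_derive_nondecreasing bs_call (fun Y => Ncdf (d Y + sd))); [exact HX | exact Huw | |].
  - intros z Hz. apply is_derive_bs_call. lra.
  - intros z1 z2 H1 H12 H2. apply Ncdf_le.
    pose proof (dbar_le z1 z2 ltac:(lra) H12). lra.
Qed.

Lemma bs_call_sub_le (a X : R) : D < a -> a <= X -> bs_call X - bs_call a <= X - a.
Proof.
  intros Ha HX. rewrite <- (Rmult_1_l (X - a)).
  apply (sub_le_of_derive_le bs_call (fun Y => Ncdf (d Y + sd)) a X HX).
  - intros z Hz. apply is_derive_bs_call. lra.
  - intros; apply Ncdf_le_1.
Qed.

(* The left side is nondecreasing in [a] up to [d X], where it equals [bs_call X]. *)
Lemma bs_call_ge (X a : R) : D < X -> a <= d X ->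
  (X - D) * Ncdf (a + sd) - Kdisc * Ncdf a <= bs_call X.
Proof.
  intros HX Ha.
  apply (le_of_derive_nonneg (fun t => (X - D) * Ncdf (t + sd) - Kdisc * Ncdf t)
           (fun t => (X - D) * normal_pdf (t + sd) - Kdisc * normal_pdf t) a (d X) Ha).
  - intros t _. apply (is_derive_minus (fun t => (X - D) * Ncdf (t + sd)) (fun t => Kdisc * Ncdf t)).
    + apply (is_derive_scal (fun t => Ncdf (t + sd))).
      rewrite <- (Rmult_1_l (normal_pdf (t + sd))).
      apply (is_derive_comp Ncdf (fun t => t + sd)); [apply is_derive_Ncdf |].
      auto_derive; [auto | ring].
    + apply (is_derive_scal Ncdf), is_derive_Ncdf.
  - intros t Ht. pose proof (normal_pdf_le_shift X t HX (proj2 Ht)). lra.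
Qed.

Lemma bs_call_nonneg (X : R) : D < X -> 0 <= bs_call X.
Proof.
  intros HX. pose proof Kdisc_pos. apply Rle_plus_epsilon. intros eps Heps.
  destruct (Ncdf_small (eps / Kdisc)) as [a Ha]; [apply Rdiv_lt_0_compat; lra |].
  set (a' := Rmin a (d X)).
  pose proof (bs_call_ge X a' HX (Rmin_r _ _)).
  pose proof (Ncdf_le a' a (Rmin_l _ _)).
  assert (0 <= (X - D) * Ncdf (a' + sd)) by (apply Rmult_le_pos; [lra | apply Ncdf_nonneg]).
  assert (Kdisc * Ncdf a' < eps).
  { replace eps with (Kdisc * (eps / Kdisc)) by (field; lra). apply Rmult_lt_compat_l; lra. }
  lra.
Qed.

Let V := Vcall K D sigma r T tau.

Lemma Vcall_bs_call (X : R) : D < X -> V X = bs_call X.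
Proof. intros HX. unfold V, Vcall. destruct (Rle_dec X D); [lra | reflexivity]. Qed.

Lemma Vcall_le_D (X : R) : X <= D -> V X = 0.
Proof. intros HX. unfold V, Vcall. destruct (Rle_dec X D); [reflexivity | lra]. Qed.

Lemma Vcall_nonneg (X : R) : 0 <= V X.
Proof.
  destruct (Rle_lt_dec X D) as [HX | HX].
  - rewrite Vcall_le_D by exact HX. lra.
  - rewrite Vcall_bs_call by exact HX. apply bs_call_nonneg, HX.
Qed.

Lemma Vcall_chord (u w X : R) : D <= u -> u < w -> u <= X <= w ->
  V X <= V u + (V w - V u) / (w - u) * (X - u).
Proof.
  intros Hu Huw HX.
  destruct (Req_dec X u) as [-> | HXu]; [rewrite Rminus_diag, Rmult_0_r; lra |].
  rewrite (Vcall_bs_call X), (Vcall_bs_call w) by lra.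
  destruct (Req_dec u D) as [-> | HuD].
  - rewrite Vcall_le_D by lra.
    pose proof (bs_call_ratio_le X w ltac:(lra) ltac:(lra)).
    replace ((bs_call w - 0) / (w - D) * (X - D)) with ((X - D) / (w - D) * bs_call w) by (field; lra).
    lra.
  - rewrite Vcall_bs_call by lra. apply bs_call_chord; lra.
Qed.

Lemma Vcall_sub_le (a X : R) : D < a -> a <= X -> V X - V a <= X - a.
Proof.
  intros Ha HX. rewrite !Vcall_bs_call by lra. apply bs_call_sub_le; assumption.
Qed.

End BlackScholes.

(** * Piecewise affine interpolation *)

Lemma chord_nonneg (p q u w x : R) : 0 <= p -> 0 <= q -> u < w -> u <= x <= w ->
  0 <= p + (q - p) / (w - u) * (x - u).
Proof.
  intros Hp Hq Huw Hx.
  assert (Ht : 0 <= (x - u) / (w - u) <= 1).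
  { split; [apply Rmult_le_pos; [lra | apply Rlt_le, Rinv_0_lt_compat; lra] |].
    apply Rmult_le_reg_r with (w - u); [lra |].
    unfold Rdiv. rewrite Rmult_assoc, Rinv_l by lra. lra. }
  replace (p + (q - p) / (w - u) * (x - u))
    with (p * (1 - (x - u) / (w - u)) + q * ((x - u) / (w - u))) by (field; lra).
  apply Rplus_le_le_0_compat; apply Rmult_le_pos; lra.
Qed.

Lemma sum_n_m_nonneg (f : nat -> R) (n m : nat) :
  (forall k, (n <= k <= m)%nat -> 0 <= f k) -> 0 <= sum_n_m f n m.
Proof.
  intros Hf. induction m as [| m IH].
  - destruct n; [rewrite sum_n_n; apply Hf; lia |].
    rewrite sum_n_m_zero by lia. apply Rle_refl.
  - destruct (Nat.le_gt_cases n (S m)) as [Hn | Hn]; [| rewrite sum_n_m_zero by lia; apply Rle_refl].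
    rewrite sum_n_Sm by exact Hn.
    apply Rplus_le_le_0_compat; [apply IH; intros; apply Hf; lia | apply Hf; lia].
Qed.

Lemma sum_n_m_ge_term (f : nat -> R) (n m i : nat) :
  (forall k, (n <= k <= m)%nat -> 0 <= f k) -> (n <= i <= m)%nat -> f i <= sum_n_m f n m.
Proof.
  intros Hf Hi. induction m as [| m IH].
  - replace i with 0%nat by lia. replace n with 0%nat by lia. rewrite sum_n_n. apply Rle_refl.
  - rewrite sum_n_Sm by lia. change (f i <= sum_n_m f n m + f (S m)).
    destruct (Nat.eq_dec i (S m)) as [-> | Hne].
    + assert (0 <= sum_n_m f n m) by (apply sum_n_m_nonneg; intros; apply Hf; lia). lra.
    + assert (0 <= f (S m)) by (apply Hf; lia).
      assert (f i <= sum_n_m f n m) by (apply IH; [intros; apply Hf | ]; lia). lra.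
Qed.

Definition affine_on (a b : R) (f : R -> R) : Prop :=
  exists c e, forall x, a < x < b -> f x = c * x + e.

Lemma affine_on_plus (a b : R) (f g : R -> R) :
  affine_on a b f -> affine_on a b g -> affine_on a b (fun x => f x + g x).
Proof.
  intros [c1 [e1 Hf]] [c2 [e2 Hg]]. exists (c1 + c2), (e1 + e2).
  intros x Hx. rewrite Hf, Hg by exact Hx. ring.
Qed.

Lemma affine_on_mult_const (a b : R) (f g : R -> R) :
  affine_on a b f -> (exists c, forall x, a < x < b -> g x = c) -> affine_on a b (fun x => f x * g x).
Proof.
  intros [c1 [e1 Hf]] [c Hg]. exists (c1 * c), (e1 * c).
  intros x Hx. rewrite Hf, Hg by exact Hx. ring.
Qed.

Lemma affine_on_sum (a b : R) (F : nat -> R -> R) (n m : nat) :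
  (forall i, (n <= i <= m)%nat -> affine_on a b (F i)) ->
  affine_on a b (fun x => sum_n_m (fun i => F i x) n m).
Proof.
  intros HF. induction m as [| m IH].
  - destruct n.
    + destruct (HF 0%nat ltac:(lia)) as [c [e He]]. exists c, e.
      intros x Hx. rewrite sum_n_n. apply He, Hx.
    + exists 0, 0. intros x _. rewrite sum_n_m_zero by lia. unfold zero; simpl. ring.
  - destruct (Nat.le_gt_cases n (S m)) as [Hn | Hn].
    + destruct IH as [c1 [e1 H1]]; [intros; apply HF; lia |].
      destruct (HF (S m) ltac:(lia)) as [c2 [e2 H2]].
      exists (c1 + c2), (e1 + e2). intros x Hx.
      rewrite sum_n_Sm by exact Hn. unfold plus; simpl. rewrite H1, H2 by exact Hx. ring.
    + exists 0, 0. intros x _. rewrite sum_n_m_zero by lia. unfold zero; simpl. ring.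
Qed.

Lemma side_of_open_interval (a b p : R) : ~ (a < p < b) ->
  (forall x, a < x < b -> p < x) \/ (forall x, a < x < b -> x < p).
Proof.
  intros Hp. destruct (Rle_lt_dec p a) as [Hpa | Hap].
  - left. intros x Hx. lra.
  - right. intros x Hx. destruct (Rlt_le_dec p b); [exfalso; apply Hp; lra | lra].
Qed.

Lemma chi_ge_const_on (a b p : R) : ~ (a < p < b) ->
  exists c, forall x, a < x < b -> chi_ge p x = c.
Proof.
  intros Hp. unfold chi_ge.
  destruct (side_of_open_interval a b p Hp) as [Hright | Hleft].
  - exists 1. intros x Hx. specialize (Hright x Hx). destruct (Rle_dec p x); [reflexivity | lra].
  - exists 0. intros x Hx. specialize (Hleft x Hx). destruct (Rle_dec p x); [lra | reflexivity].
Qed.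

Lemma chi_cc_const_on (a b p q : R) : ~ (a < p < b) -> ~ (a < q < b) ->
  exists c, forall x, a < x < b -> chi_cc p q x = c.
Proof.
  intros Hp Hq. unfold chi_cc.
  destruct (side_of_open_interval a b p Hp) as [Hpr | Hpl].
  - destruct (side_of_open_interval a b q Hq) as [Hqr | Hql].
    + exists 0. intros x Hx. specialize (Hqr x Hx).
      destruct (Rle_dec p x); [destruct (Rle_dec x q); [lra | reflexivity] | reflexivity].
    + exists 1. intros x Hx. specialize (Hpr x Hx). specialize (Hql x Hx).
      destruct (Rle_dec p x); [destruct (Rle_dec x q); [reflexivity | lra] | lra].
  - exists 0. intros x Hx. specialize (Hpl x Hx). destruct (Rle_dec p x); [lra | reflexivity].
Qed.

Section Interpolation.
Variables K D sigma r T tau Sstar : R.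
Variable M : nat.
Hypotheses (HK : 0 < K) (Hsigma : 0 < sigma) (Htau : tau < T) (HSstar : D < Sstar) (HM : (1 <= M)%nat).

Let V := Vcall K D sigma r T tau.
Let nd := node D Sstar M.
Let h := (Sstar - D) / INR M.

Lemma mesh_pos : 0 < h.
Proof. apply Rdiv_lt_0_compat; [lra | apply lt_0_INR; lia]. Qed.

Lemma node_0 : nd 0 = D.
Proof. unfold nd, node. simpl. ring. Qed.

Lemma node_M : nd M = Sstar.
Proof.
  unfold nd, node. assert (0 < INR M) by (apply lt_0_INR; lia). field. lra.
Qed.

Lemma node_pred (i : nat) : (1 <= i)%nat -> nd i = nd (i - 1) + h.
Proof. intros Hi. unfold nd, node. fold h. rewrite minus_INR by lia. simpl. ring. Qed.

Lemma node_ge_D (i : nat) : D <= nd i.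
Proof.
  unfold nd, node. fold h. pose proof mesh_pos. pose proof (pos_INR i).
  assert (0 <= INR i * h) by (apply Rmult_le_pos; lra). lra.
Qed.

Lemma node_bracket (X : R) (n : nat) : (1 <= n)%nat -> D <= X <= nd n ->
  exists i, (1 <= i <= n)%nat /\ nd (i - 1) <= X <= nd i.
Proof.
  intros Hn HX. induction n as [| n IH]; [lia |].
  destruct (Rle_lt_dec X (nd n)) as [Hle | Hlt].
  - destruct n as [| n].
    + exists 1%nat. split; [lia |]. simpl. rewrite node_0. lra.
    + destruct IH as [i [Hi HXi]]; [lia | lra |]. exists i. split; [lia | exact HXi].
  - exists (S n). split; [lia |]. replace (S n - 1)%nat with n by lia. lra.
Qed.

Lemma alpha_eq (i : nat) : alpha K D sigma r T tau Sstar M i = (V (nd i) - V (nd (i - 1))) / h.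
Proof.
  unfold alpha, h. fold V nd. assert (0 < INR M) by (apply lt_0_INR; lia). field. split; lra.
Qed.

Definition V1_piece (i : nat) (x : R) : R :=
  (alpha K D sigma r T tau Sstar M i * (x - nd (i - 1)) + V (nd (i - 1)))
  * chi_cc (nd (i - 1)) (nd i) x.

Lemma V1plus_sum (x : R) : V1plus K D sigma r T tau Sstar M x = sum_n_m (fun i => V1_piece i x) 1 M.
Proof. reflexivity. Qed.

Lemma V1_piece_chord (i : nat) (x : R) : (1 <= i)%nat -> nd (i - 1) <= x <= nd i ->
  V1_piece i x = V (nd (i - 1)) + (V (nd i) - V (nd (i - 1))) / (nd i - nd (i - 1)) * (x - nd (i - 1)).
Proof.
  intros Hi Hx. unfold V1_piece, chi_cc.
  destruct (Rle_dec (nd (i - 1)) x); [| lra]. destruct (Rle_dec x (nd i)); [| lra].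
  assert (Hh : nd i - nd (i - 1) = h) by (rewrite (node_pred i Hi); ring).
  rewrite Hh, alpha_eq. ring.
Qed.

Lemma V1_piece_nonneg (i : nat) (x : R) : (1 <= i)%nat -> 0 <= V1_piece i x.
Proof.
  intros Hi.
  destruct (Rle_dec (nd (i - 1)) x) as [H1 | H1]; [destruct (Rle_dec x (nd i)) as [H2 | H2] |].
  - rewrite V1_piece_chord by (auto; lra).
    pose proof (node_pred i Hi). pose proof mesh_pos.
    apply chord_nonneg; [apply (Vcall_nonneg K D sigma r T tau HK Hsigma Htau) .. | lra | lra].
  - unfold V1_piece, chi_cc.
    destruct (Rle_dec (nd (i - 1)) x); [destruct (Rle_dec x (nd i)) |]; lra.
  - unfold V1_piece, chi_cc. destruct (Rle_dec (nd (i - 1)) x); lra.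
Qed.

Lemma V2plus_nonneg (x : R) : 0 <= V2plus K D sigma r T tau Sstar x.
Proof.
  unfold V2plus, chi_ge. pose proof (Vcall_nonneg K D sigma r T tau HK Hsigma Htau Sstar).
  destruct (Rle_dec Sstar x); lra.
Qed.

Lemma V1plus_nonneg (x : R) : 0 <= V1plus K D sigma r T tau Sstar M x.
Proof. rewrite V1plus_sum. apply (sum_n_m_nonneg (fun k => V1_piece k x)). intros k Hk. apply V1_piece_nonneg. lia. Qed.

Lemma Vcall_le_interp (x : R) : D < x ->
  V x <= V1plus K D sigma r T tau Sstar M x + V2plus K D sigma r T tau Sstar x.
Proof.
  intros Hx. pose proof (V1plus_nonneg x). pose proof (V2plus_nonneg x).
  destruct (Rle_lt_dec x Sstar) as [HxS | HxS].
  - destruct (node_bracket x M HM) as [i [Hi Hxi]]; [rewrite node_M; lra |].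
    assert (Hpiece : V1_piece i x <= V1plus K D sigma r T tau Sstar M x).
    { rewrite V1plus_sum. apply (sum_n_m_ge_term (fun k => V1_piece k x)); [| exact Hi].
      intros k Hk. apply V1_piece_nonneg. lia. }
    rewrite V1_piece_chord in Hpiece by (lia || exact Hxi).
    pose proof (node_pred i ltac:(lia)). pose proof mesh_pos.
    pose proof (Vcall_chord K D sigma r T tau HK Hsigma Htau (nd (i - 1)) (nd i) x
                  (node_ge_D (i - 1)) ltac:(lra) Hxi) as Hchord.
    fold V in Hchord. lra.
  - unfold V, V2plus, chi_ge. destruct (Rle_dec Sstar x); [| lra].
    pose proof (Vcall_sub_le K D sigma r T tau HK Hsigma Htau Sstar x HSstar (Rlt_le _ _ HxS)).
    lra.
Qed.

Lemma interp_piecewise_linear :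
  piecewise_linear (fun x => V1plus K D sigma r T tau Sstar M x + V2plus K D sigma r T tau Sstar x).
Proof.
  exists (map nd (seq 0 (S M))).
  intros a b _ Hpts.
  assert (Hnode : forall k, (k <= M)%nat -> ~ (a < nd k < b)).
  { intros k Hk. apply Hpts, in_map, in_seq. lia. }
  apply affine_on_plus.
  - apply (affine_on_sum a b V1_piece 1 M). intros i Hi.
    apply affine_on_mult_const.
    + exists (alpha K D sigma r T tau Sstar M i),
        (V (nd (i - 1)) - alpha K D sigma r T tau Sstar M i * nd (i - 1)).
      intros x _. ring.
    + apply chi_cc_const_on; apply Hnode; lia.
  - apply affine_on_mult_const.
    + exists 1, (V Sstar - Sstar). intros x _. unfold V. ring.
    + apply chi_ge_const_on. rewrite <- node_M. apply Hnode. lia.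
Qed.

End Interpolation.

Theorem lemma2 (K D sigma r T tau Sstar : R) (M : nat) :
  0 < K -> 0 < D -> 0 < sigma -> 0 < tau -> tau < T ->
  D < Sstar -> (1 <= M)%nat ->
  (forall S, D < S ->
     Vcall K D sigma r T tau S
     <= V1plus K D sigma r T tau Sstar M S + V2plus K D sigma r T tau Sstar S)
  /\ piecewise_linear (fun S => V1plus K D sigma r T tau Sstar M S + V2plus K D sigma r T tau Sstar S)
  /\ (forall S, 0 <= V1plus K D sigma r T tau Sstar M S + V2plus K D sigma r T tau Sstar S)
  /\ (forall S, 0 < S -> S <= D -> Vcall K D sigma r T tau S = 0).
Proof.
  intros HK _ Hsigma _ Htau HSstar HM.
  split; [| split; [| split]].
  - intros S HS. apply Vcall_le_interp; assumption.
  - apply interp_piecewise_linear; assumption.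
  - intros S. apply Rplus_le_le_0_compat.
    + apply V1plus_nonneg; assumption.
    + apply V2plus_nonneg; assumption.
  - intros S _ HS. apply Vcall_le_D, HS.
Qed.
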